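(* Let $c$ be a step speed function and $q\in\mathbb R$. Fix $z,w>0$. There exists a constant $C=C(z,w,c(\cdot-q))<\infty$ such that for all $0<\delta\le1$ and all $0\le a\le z$, $$\Gamma^q((a,0),(z,\delta))-\Gamma^q((a,0),(z,0))\le C\sqrt\delta,$$ and for all $0\le b\le w$, $$\Gamma^q((-b,b),(-w,w+\delta))-\Gamma^q((-b,b),(-w,w))\le C\sqrt\delta.$$
   Context: A step speed function is $c(x)=\sum_{m=1}^{L-1}r_m\mathbf 1_{(a_m,a_{m+1})}(x)+\sum_{m=2}^{L-1}\min\{r_{m-1},r_m\}\mathbf 1_{\{a_m\}}(x)$ with $-\infty=a_1<\dots<a_L=+\infty$ and $r_m>0$. $\mathcal W=\{(x,y):y\ge0,x\ge-y\}$; $\gamma(x,y)=(\sqrt{x+y}+\sqrt y)^2$. For points $P$ and $Q\in P+\mathcal W$, $\Gamma^q(P,Q)=\sup\int_0^1\frac{\gamma(\mathbf x'(s))}{c(x_1(s)-q)}ds$, the supremum over continuous piecewise $C^1$ paths $\mathbf x=(x_1,x_2):[0,1]\to\mathbb R^2$ with $\mathbf x(0)=P$, $\mathbf x(1)=Q$ and $\mathbf x'(s)\in\mathcal W$ wherever defined. *)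

From Stdlib Require Import Reals Lra.
Open Scope R_scope.

(** * Step speed functions
    Finite breakpoints b 0 < b 1 < ... < b (n-1)  (these are a_2,...,a_{L-1},
    so n = L-2), and rates r 0, ..., r n (these are r_1,...,r_{L-1}).
    On the open interval between consecutive breakpoints (with -oo/+oo at the
    ends) the speed is the corresponding rate; at a breakpoint b j it is the
    minimum of the two neighbouring rates r j, r (j+1). *)

Fixpoint bp_count (n : nat) (b : nat -> R) (x : R) : nat :=
  match n with
  | O => O
  | S k => (bp_count k b x + (if Rlt_dec (b k) x then 1 else 0))%nat
  end.

Fixpoint bp_index (n : nat) (b : nat -> R) (x : R) : option nat :=
  match n with
  | O => None
  | S k => if Req_EM_T x (b k) then Some k else bp_index k b x
  end.

Definition step_speed (n : nat) (b r : nat -> R) (x : R) : R :=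
  match bp_index n b x with
  | Some j => Rmin (r j) (r (S j))
  | None => r (bp_count n b x)
  end.

Definition is_step_speed_data (n : nat) (b r : nat -> R) : Prop :=
  (forall j : nat, (S j < n)%nat -> b j < b (S j)) /\
  (forall m : nat, (m <= n)%nat -> 0 < r m).

Definition inW (x y : R) : Prop := 0 <= y /\ - y <= x.

Definition gamma (x y : R) : R := (sqrt (x + y) + sqrt y) ^ 2.

Fixpoint rsum (k : nat) (g : nat -> R) : R :=
  match k with
  | O => 0
  | S j => rsum j g + g j
  end.

Definition is_partition01 (k : nat) (p : nat -> R) : Prop :=
  p O = 0 /\ p k = 1 /\ (forall i : nat, (i < k)%nat -> p i < p (S i)).

(** upper Darboux sums of f over [0,1] (bounds M i need not be least) *)
Definition upper_sums (f : R -> R) (U : R) : Prop :=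
  exists (k : nat) (p M : nat -> R),
    is_partition01 k p /\
    (forall i : nat, (i < k)%nat ->
       forall s, p i <= s <= p (S i) -> f s <= M i) /\
    U = rsum k (fun i => (p (S i) - p i) * M i).

Definition is_glb (E : R -> Prop) (m : R) : Prop :=
  (forall x, E x -> m <= x) /\ (forall l, (forall x, E x -> l <= x) -> l <= m).

Definition upper_integral01 (f : R -> R) (I : R) : Prop :=
  is_glb (upper_sums f) I.

Definition cont_on01 (g : R -> R) : Prop :=
  forall s, 0 <= s <= 1 -> forall eps, eps > 0 ->
    exists del, del > 0 /\
      forall t, 0 <= t <= 1 -> Rabs (t - s) < del -> Rabs (g t - g s) < eps.

Definition admissible_path (x1 x2 d1 d2 : R -> R) : Prop :=
  cont_on01 x1 /\ cont_on01 x2 /\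
  exists (k : nat) (p : nat -> R),
    is_partition01 k p /\
    forall i : nat, (i < k)%nat ->
      (forall s, p i < s < p (S i) ->
         derivable_pt_lim x1 s (d1 s) /\ derivable_pt_lim x2 s (d2 s) /\
         inW (d1 s) (d2 s)) /\
      (exists e1 e2 : R -> R, continuity e1 /\ continuity e2 /\
         forall s, p i < s < p (S i) -> e1 s = d1 s /\ e2 s = d2 s).

(** The integral is the upper Darboux integral, which for
    this (bounded, upper semicontinuous off finitely many points) integrand
    coincides with the Lebesgue integral. *)
Definition path_value (c : R -> R) (q : R) (P Q : R * R) (v : R) : Prop :=
  exists x1 x2 d1 d2 : R -> R,
    admissible_path x1 x2 d1 d2 /\
    x1 0 = fst P /\ x2 0 = snd P /\ x1 1 = fst Q /\ x2 1 = snd Q /\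
    upper_integral01 (fun s => gamma (d1 s) (d2 s) / c (x1 s - q)) v.

Definition is_Gamma (c : R -> R) (q : R) (P Q : R * R) (G : R) : Prop :=
  is_lub (path_value c q P Q) G.

From Stdlib Require Import Reals Lra Lia.
Open Scope R_scope.

(* Along any admissible path ending at (z, delta) the slow coordinate (x2 in the
   first estimate, x1 + x2 in the second) is nondecreasing, hence confined to a
   strip of width delta.  There 1/c is dominated by a smoothed majorant psi of the
   step function 1/c, evaluated at the other coordinate, and the AM-GM bound
   (sqrt u + sqrt y)^2 <= (1 + e) u + (1 + 1/e) y with e = sqrt delta turns the
   integrand into the derivative of an explicit potential plus O(sqrt delta)
   terms; so every path value, hence Gamma to (z, delta), is at most the increase
   of that potential.  Conversely the straight path to (z, 0) is admissible and
   its value is at least the increase of a primitive of a smoothed minorant phi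
   of 1/c.  The primitives of psi and phi differ by O(delta).  Upper Darboux
   integrals are compared with primitives through the mean value theorem. *)

(** * Upper Darboux sums and the mean value theorem *)

Inductive upper_chain (f : R -> R) : R -> R -> R -> Prop :=
| upper_chain_one a b M :
    a < b -> (forall s, a <= s <= b -> f s <= M) -> upper_chain f a b ((b - a) * M)
| upper_chain_cons a b c M U :
    a < b -> (forall s, a <= s <= b -> f s <= M) -> upper_chain f b c U ->
    upper_chain f a c ((b - a) * M + U).

Lemma upper_chain_app f a b c U1 U2 :
  upper_chain f a b U1 -> upper_chain f b c U2 -> upper_chain f a c (U1 + U2).
Proof.
  intros H1; revert c U2; induction H1 as [a b M Hab HM|a b c' M U Hab HM _ IH];
    intros c U2 H2.
  - now apply upper_chain_cons.
  - replace ((b - a) * M + U + U2) with ((b - a) * M + (U + U2)) by ring.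
    now apply upper_chain_cons, IH.
Qed.

Lemma rsum_succ_l k g : rsum (S k) g = g 0%nat + rsum k (fun i => g (S i)).
Proof. induction k as [|k IH]; simpl in *; [ring | rewrite IH; ring]. Qed.

Lemma upper_chain_partition f a c U : upper_chain f a c U ->
  exists k p M, p 0%nat = a /\ p k = c /\
    (forall i, (i < k)%nat -> p i < p (S i)) /\
    (forall i, (i < k)%nat -> forall s, p i <= s <= p (S i) -> f s <= M i) /\
    U = rsum k (fun i => (p (S i) - p i) * M i).
Proof.
  induction 1 as [a b M Hab HM|a b c M U Hab HM _ (k & p & M' & Hp0 & Hpk & Hp & HM' & ->)].
  - exists 1%nat, (fun i => match i with O => a | _ => b end), (fun _ => M).
    repeat split; try (intros [|i] Hi; [auto | lia]). simpl; ring.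
  - exists (S k), (fun i => match i with O => a | S j => p j end),
      (fun i => match i with O => M | S j => M' j end).
    repeat split; auto.
    + intros [|i] Hi; [rewrite Hp0 | apply Hp; lia]; auto.
    + intros [|i] Hi s Hs; [rewrite Hp0 in Hs | apply (HM' i)]; auto; lia.
    + now rewrite rsum_succ_l, Hp0.
Qed.

Lemma upper_chain_upper_sums f U : upper_chain f 0 1 U -> upper_sums f U.
Proof.
  intros H. destruct (upper_chain_partition _ _ _ _ H) as (k & p & M & ? & ? & ? & ? & ?).
  exists k, p, M. repeat split; auto.
Qed.

Lemma partition01_le k p : is_partition01 k p -> forall i j, (i <= j <= k)%nat -> p i <= p j.
Proof.
  intros (_ & _ & Hp) i j Hij. induction j as [|j IH].
  - replace i with 0%nat by lia. lra.
  - destruct (Nat.eq_dec i (S j)) as [->|]; [lra|].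
    specialize (Hp j ltac:(lia)). specialize (IH ltac:(lia)). lra.
Qed.

Lemma partition01_range k p : is_partition01 k p -> forall i, (i <= k)%nat -> 0 <= p i <= 1.
Proof.
  intros Hp i Hi. pose proof (partition01_le k p Hp 0 i ltac:(lia)).
  pose proof (partition01_le k p Hp i k ltac:(lia)). destruct Hp as (Hp0 & Hpk & _). lra.
Qed.

Lemma continuity_pt_iff F x : continuity_pt F x <-> forall eps, 0 < eps ->
  exists del, 0 < del /\ forall y, Rabs (y - x) < del -> Rabs (F y - F x) < eps.
Proof.
  split; intros HF eps He; destruct (HF eps He) as (d & Hd & Hy); exists d; split; auto.
  - intros y Hyx. destruct (Req_dec x y) as [<-|Hne].
    + unfold Rminus. rewrite Rplus_opp_r, Rabs_R0. lra.
    + apply Hy. repeat split; auto.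
  - intros y [_ Hyx]. apply Hy, Hyx.
Qed.

Definition clamp01 (x : R) : R := Rmax 0 (Rmin 1 x).

Lemma clamp01_id x : 0 <= x <= 1 -> clamp01 x = x.
Proof. intros H. unfold clamp01. rewrite Rmin_right, Rmax_right; lra. Qed.

Lemma clamp01_range x : 0 <= clamp01 x <= 1.
Proof. unfold clamp01, Rmax, Rmin. repeat destruct Rle_dec; lra. Qed.

Lemma clamp01_lipschitz x y : Rabs (clamp01 x - clamp01 y) <= Rabs (x - y).
Proof.
  unfold clamp01, Rmax, Rmin. repeat destruct Rle_dec; unfold Rabs; repeat destruct Rcase_abs; lra.
Qed.

Lemma continuity_clamp01 : continuity clamp01.
Proof.
  intros x. apply continuity_pt_iff. intros eps He. exists eps. split; auto.
  intros y Hy. pose proof (clamp01_lipschitz y x). lra.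
Qed.

Lemma continuity_clamp01_comp u : cont_on01 u -> continuity (fun x => u (clamp01 x)).
Proof.
  intros Hu x. apply continuity_pt_iff. intros eps He.
  destruct (Hu (clamp01 x) (clamp01_range x) eps He) as (d & Hd & H).
  exists d. split; auto. intros y Hy. apply H; [apply clamp01_range|].
  pose proof (clamp01_lipschitz y x). lra.
Qed.

Lemma cont_on01_of_clamp01_comp u : continuity (fun x => u (clamp01 x)) -> cont_on01 u.
Proof.
  intros Hu s Hs eps He.
  destruct (proj1 (continuity_pt_iff _ s) (Hu s) eps He) as (d & Hd & H).
  exists d. split; auto. intros t Ht Hts.
  specialize (H t Hts). now rewrite !clamp01_id in H.
Qed.

Lemma cont_on01_of_continuity u : continuity u -> cont_on01 u.
Proof.
  intros Hu s _ eps He. destruct (proj1 (continuity_pt_iff u s) (Hu s) eps He) as (d & Hd & H).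
  exists d. split; auto.
Qed.

Lemma derivable_pt_lim_affine a k x : derivable_pt_lim (fun x => a * x + k) x a.
Proof.
  apply (derivable_pt_lim_ext (mult_real_fct a id + fct_cte k)%F); [intros y; reflexivity|].
  replace a with (a * 1 + 0) at 2 by ring.
  apply derivable_pt_lim_plus; [apply derivable_pt_lim_scal, derivable_pt_lim_id|].
  apply derivable_pt_lim_const.
Qed.

Lemma continuity_affine a k : continuity (fun x => a * x + k).
Proof.
  intros x. exact (derivable_continuous_pt _ _ (exist _ a (derivable_pt_lim_affine a k x))).
Qed.

(* Stdlib's [MVT] wants two-sided continuity at the endpoints; extending [H] by
   [H o clamp01] provides it from continuity within [[0,1]]. *)
Lemma MVT_on01 H g a b : 0 <= a -> a < b -> b <= 1 -> cont_on01 H ->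
  (forall s, a < s < b -> derivable_pt_lim H s (g s)) ->
  exists c, a < c < b /\ H b - H a = g c * (b - a).
Proof.
  intros Ha Hab Hb HC HD.
  set (He := fun x => H (clamp01 x)).
  assert (HeD : forall c, a < c < b -> derivable_pt_lim He c (g c)).
  { intros c Hc. apply (derivable_pt_lim_locally_ext H He c 0 1); [lra| |auto].
    intros y Hy. unfold He. rewrite clamp01_id; lra. }
  destruct (MVT He id a b (fun c Hc => exist _ (g c) (HeD c Hc)) (fun c _ => derivable_pt_id c) Hab
    (fun c _ => continuity_clamp01_comp H HC c)
    (fun c _ => derivable_continuous_pt _ _ (derivable_pt_id c)))
    as (c & Hc & E).
  exists c. split; auto.
  rewrite derive_pt_id in E. unfold He, id in E. simpl in E.
  rewrite !clamp01_id in E by lra. lra.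
Qed.

Section Piece.
Variables (f H g : R -> R) (al be e' du B : R).
Hypotheses (He' : 0 < e') (Hal : 0 <= al) (Hbe : be <= 1) (HC : cont_on01 H)
  (Hd : forall s, al < s < be -> derivable_pt_lim H s (g s) /\ f s <= g s)
  (Hunif : forall x y, al <= x <= be -> al <= y <= be -> Rabs (x - y) < du ->
     Rabs (g x - g y) < e')
  (HB : forall s, al <= s <= be -> Rabs (g s) <= B).

Lemma upper_piece s0 s1 x0 : al <= s0 -> s0 < s1 -> s1 <= be -> s1 - s0 < du ->
  s0 <= x0 <= s1 -> (forall s, s0 <= s <= s1 -> s <> x0 -> al < s < be) ->
  upper_chain f s0 s1 ((s1 - s0) * Rmax (f x0) (g x0 + e')).
Proof.
  intros H0 H01 H1 Hdu Hx0 Hint. apply upper_chain_one; auto.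
  intros s Hs. destruct (Req_dec s x0) as [->|Hne]; [apply Rmax_l|].
  eapply Rle_trans; [|apply Rmax_r].
  assert (Hfg := proj2 (Hd s (Hint s Hs Hne))).
  assert (Hgg := Hunif s x0 ltac:(lra) ltac:(lra) ltac:(unfold Rabs; destruct Rcase_abs; lra)).
  apply Rabs_def2 in Hgg. lra.
Qed.

Lemma interior_piece s0 s1 : al < s0 -> s0 < s1 -> s1 < be -> s1 - s0 < du ->
  (s1 - s0) * Rmax (f s0) (g s0 + e') <= H s1 - H s0 + 2 * e' * (s1 - s0).
Proof.
  intros H0 H01 H1 Hdu.
  rewrite Rmax_right by (pose proof (proj2 (Hd s0 ltac:(lra))); lra).
  destruct (MVT_on01 H g s0 s1) as (c & Hc & ->); try lra; auto.
  { intros s Hs. apply Hd. lra. }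
  assert (Hgg := Hunif c s0 ltac:(lra) ltac:(lra) ltac:(rewrite Rabs_right; lra)).
  apply Rabs_def2 in Hgg. nra.
Qed.

Lemma interior_chain h : 0 < h -> h < du -> forall m t, al < t -> t + INR (S m) * h < be ->
  exists U, upper_chain f t (t + INR (S m) * h) U /\
    U <= H (t + INR (S m) * h) - H t + 2 * e' * (INR (S m) * h).
Proof.
  intros Hh Hhdu. induction m as [|m IH]; intros t Ht Hm.
  - change (INR 1) with 1 in *. rewrite Rmult_1_l in *.
    exists ((t + h - t) * Rmax (f t) (g t + e')). split.
    + apply upper_piece; try lra. intros s Hs Hne. lra.
    + pose proof (interior_piece t (t + h) Ht ltac:(lra) ltac:(lra) ltac:(lra)). lra.
  - rewrite (S_INR (S m)) in Hm |- *.
    assert (HSm : 0 <= INR (S m) * h) by (pose proof (pos_INR (S m)); nra).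
    replace (t + (INR (S m) + 1) * h) with (t + h + INR (S m) * h) in * by ring.
    destruct (IH (t + h) ltac:(lra) ltac:(lra)) as (U & HU & HUb).
    exists ((t + h - t) * Rmax (f t) (g t + e') + U).
    split.
    + apply upper_chain_app with (t + h); auto.
      apply upper_piece; try lra. intros s Hs Hne. lra.
    + pose proof (interior_piece t (t + h) Ht ltac:(lra) ltac:(lra) ltac:(lra)). lra.
Qed.

Lemma end_piece s0 s1 x0 : al <= s0 -> s0 < s1 -> s1 <= be -> al <= x0 <= be ->
  (s1 - s0) * Rmax (f x0) (g x0 + e') <=
  H s1 - H s0 + (s1 - s0) * (Rabs (f x0) + 2 * B + e').
Proof.
  intros H0 H01 H1 Hx0.
  destruct (MVT_on01 H g s0 s1) as (c & Hc & ->); try lra; auto.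
  { intros s Hs. apply Hd. lra. }
  assert (Hgc := HB c ltac:(lra)). assert (Hgx := HB x0 Hx0).
  assert (Rmax (f x0) (g x0 + e') <= Rabs (f x0) + B + e').
  { pose proof (Rle_abs (f x0)). pose proof (Rle_abs (g x0)).
    pose proof (Rabs_pos (g x0)). pose proof (Rabs_pos (f x0)). apply Rmax_lub; lra. }
  pose proof (Rle_abs (- g c)). rewrite Rabs_Ropp in *.
  assert (HM : (s1 - s0) * Rmax (f x0) (g x0 + e') <= (s1 - s0) * (Rabs (f x0) + B + e'))
    by (apply Rmult_le_compat_l; lra).
  assert (- B * (s1 - s0) <= g c * (s1 - s0)) by (apply Rmult_le_compat_r; lra).
  lra.
Qed.

End Piece.

Lemma uniform_step L eta : 0 < L -> 0 < eta ->
  exists h m, 0 < h < eta /\ L = h + INR (S m) * h + h.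
Proof.
  intros HL He. destruct (archimed_cor1 (eta / L)) as (N & HN & HN0).
  { apply Rdiv_lt_0_compat; lra. }
  assert (HNp : 0 < INR N) by (apply lt_0_INR; lia).
  exists (L / (INR N + 3)), N. split; [split|].
  - apply Rdiv_lt_0_compat; lra.
  - apply Rmult_lt_compat_r with (r := L) in HN; [|lra].
    replace (eta / L * L) with eta in HN by (field; lra).
    apply Rle_lt_trans with (/ INR N * L); [|lra].
    unfold Rdiv. rewrite Rmult_comm. apply Rmult_le_compat_r; [lra|].
    apply Rinv_le_contravar; lra.
  - rewrite S_INR. field. lra.
Qed.

(* Cut [[al,be]] into equal pieces of width [h]; on the interior ones [f <= g] up to the
   oscillation of [g], while the two end pieces absorb the values of [f] at [al], [be]. *)
Lemma upper_chain_increment f H g al be eps : 0 <= al -> al < be -> be <= 1 ->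
  cont_on01 H -> continuity g ->
  (forall s, al < s < be -> derivable_pt_lim H s (g s) /\ f s <= g s) -> 0 < eps ->
  exists U, upper_chain f al be U /\ U <= H be - H al + eps.
Proof.
  intros Hal Hab Hbe HC Hg Hd Heps.
  set (L := be - al). assert (HL : 0 < L) by (unfold L; lra).
  destruct (continuity_ab_maj (comp Rabs g) al be ltac:(lra))
    as (xB & HxB & _); [intros c _; apply continuity_comp; auto; apply Rcontinuity_abs|].
  set (B := Rabs (g xB)). unfold comp in HxB. assert (HB0 : 0 <= B) by apply Rabs_pos.
  set (e' := eps / (4 * L)). assert (He' : 0 < e') by (apply Rdiv_lt_0_compat; lra).
  destruct (@Heine_cor1 g al be Hab (fun x _ => Hg x) (mkposreal e' He')) as ([du Hdu] & _ & Hunif).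
  simpl in Hunif.
  set (K := Rabs (f al) + Rabs (f be) + 4 * B + 2 * e').
  assert (HK : 0 <= K)
    by (pose proof (Rabs_pos (f al)); pose proof (Rabs_pos (f be)); unfold K; lra).
  destruct (uniform_step L (Rmin du (eps / (2 * (K + 1))))) as (h & m & [Hh Hmin] & HLh); auto.
  { apply Rmin_pos; [lra | apply Rdiv_lt_0_compat; lra]. }
  assert (Hhdu : h < du) by (pose proof (Rmin_l du (eps / (2 * (K + 1)))); lra).
  assert (HhK : h * (K + 1) <= eps / 2).
  { pose proof (Rmin_r du (eps / (2 * (K + 1)))) as HmK.
    apply Rmult_le_compat_r with (r := K + 1) in HmK; [|lra].
    replace (eps / (2 * (K + 1)) * (K + 1)) with (eps / 2) in HmK by (field; lra). nra. }
  assert (HSm : 0 <= INR (S m) * h) by (pose proof (pos_INR (S m)); nra).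
  assert (Ht2 : al + h + INR (S m) * h = be - h) by (unfold L in HLh; lra).
  destruct (interior_chain f H g al be e' du He' Hal Hbe HC Hd Hunif h Hh Hhdu m (al + h))
    as (U & HU & HUb); [lra | lra|].
  rewrite Ht2 in HU, HUb.
  exists ((al + h - al) * Rmax (f al) (g al + e')
          + (U + (be - (be - h)) * Rmax (f be) (g be + e'))).
  split.
  - apply upper_chain_app with (al + h); [|apply upper_chain_app with (be - h); auto].
    + apply (upper_piece f H g al be e' du Hd Hunif); try lra. intros s Hs Hne. lra.
    + apply (upper_piece f H g al be e' du Hd Hunif); try lra. intros s Hs Hne. lra.
  - pose proof (end_piece f H g al be e' B He' Hal Hbe HC Hd HxB al (al + h) al) as E1.
    pose proof (end_piece f H g al be e' B He' Hal Hbe HC Hd HxB (be - h) be be) as E2.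
    replace (al + h - al) with h in * by ring. replace (be - (be - h)) with h in * by ring.
    assert (2 * e' * (INR (S m) * h) <= eps / 2).
    { replace (eps / 2) with (2 * e' * L) by (unfold e'; field; lra).
      apply Rmult_le_compat_l; lra. }
    unfold K in HhK. specialize (E1 ltac:(lra) ltac:(lra) ltac:(lra) ltac:(lra)).
    specialize (E2 ltac:(lra) ltac:(lra) ltac:(lra) ltac:(lra)). nra.
Qed.

Lemma upper_integral01_le_increment f H k p : is_partition01 k p -> cont_on01 H ->
  (forall i, (i < k)%nat -> exists g, continuity g /\
     forall s, p i < s < p (S i) -> derivable_pt_lim H s (g s) /\ f s <= g s) ->
  forall v, upper_integral01 f v -> v <= H 1 - H 0.
Proof.
  intros Hp HC Hg v [Hv _]. pose proof Hp as (Hp0 & Hpk & Hps).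
  assert (Hchain : forall j, (0 < j <= k)%nat -> forall eps, 0 < eps ->
     exists U, upper_chain f 0 (p j) U /\ U <= H (p j) - H 0 + eps).
  { induction j as [|j IH]; intros Hj eps Heps; [lia|].
    pose proof (partition01_range k p Hp j ltac:(lia)).
    pose proof (partition01_range k p Hp (S j) ltac:(lia)).
    destruct (Hg j ltac:(lia)) as (g & Hgc & Hgd).
    destruct (upper_chain_increment f H g (p j) (p (S j)) (eps / 2)) as (U2 & HU2 & HU2b);
      try lra; auto; [apply Hps; lia|].
    destruct j as [|j].
    - rewrite Hp0 in *. exists U2. split; auto. lra.
    - destruct (IH ltac:(lia) (eps / 2) ltac:(lra)) as (U1 & HU1 & HU1b).
      exists (U1 + U2). split; [eapply upper_chain_app; eauto | lra]. }
  apply Rle_plus_epsilon. intros eps Heps.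
  destruct k as [|k]; [rewrite Hp0 in Hpk; lra|].
  destruct (Hchain (S k) ltac:(lia) eps Heps) as (U & HU & HUb). rewrite Hpk in *.
  pose proof (Hv U (upper_chain_upper_sums f U HU)). lra.
Qed.

Lemma increment_le_upper_integral01 f H h : cont_on01 H ->
  (forall s, 0 < s < 1 -> derivable_pt_lim H s (h s) /\ h s <= f s) ->
  forall v, upper_integral01 f v -> H 1 - H 0 <= v.
Proof.
  intros HC Hd v [_ Hv]. apply Hv. intros U (k & p & M & Hp & HM & ->).
  pose proof Hp as (Hp0 & Hpk & Hps).
  assert (Hj : forall j, (j <= k)%nat ->
    H (p j) - H (p 0%nat) <= rsum j (fun i => (p (S i) - p i) * M i)).
  { induction j as [|j IH]; intros Hj; simpl; [lra|].
    pose proof (partition01_range k p Hp j ltac:(lia)).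
    pose proof (partition01_range k p Hp (S j) ltac:(lia)).
    pose proof (Hps j ltac:(lia)).
    destruct (MVT_on01 H h (p j) (p (S j))) as (c & Hc & E); try lra; auto.
    { intros s Hs. apply Hd. lra. }
    assert (h c <= M j)
      by (pose proof (proj2 (Hd c ltac:(lra))); pose proof (HM j ltac:(lia) c ltac:(lra)); lra).
    assert (h c * (p (S j) - p j) <= (p (S j) - p j) * M j)
      by (rewrite Rmult_comm; apply Rmult_le_compat_l; lra).
    specialize (IH ltac:(lia)). lra. }
  specialize (Hj k (le_n k)). now rewrite Hp0, Hpk in Hj.
Qed.

Lemma piecewise_nondecreasing g d k p : is_partition01 k p -> cont_on01 g ->
  (forall i, (i < k)%nat -> forall s, p i < s < p (S i) ->
     derivable_pt_lim g s (d s) /\ 0 <= d s) ->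
  forall s, 0 <= s <= 1 -> g 0 <= g s <= g 1.
Proof.
  intros Hp HC Hd. pose proof Hp as (Hp0 & Hpk & Hps).
  assert (Hj : forall j, (j <= k)%nat -> forall s, 0 <= s <= p j -> g 0 <= g s <= g (p j)).
  { induction j as [|j IH]; intros Hj s Hs.
    - rewrite Hp0 in *. replace s with 0 by lra. lra.
    - pose proof (partition01_range k p Hp j ltac:(lia)).
      pose proof (partition01_range k p Hp (S j) ltac:(lia)).
      assert (Hmon : forall a b, p j <= a -> a <= b -> b <= p (S j) -> g a <= g b).
      { intros a b Ha Hab Hb. destruct (Req_dec a b) as [->|Hne]; [lra|].
        destruct (MVT_on01 g d a b) as (c & Hc & E); try lra; auto.
        { intros t Ht. apply (Hd j); lia || lra. }
        pose proof (proj2 (Hd j ltac:(lia) c ltac:(lra))). nra. }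
      pose proof (Hps j ltac:(lia)).
      pose proof (IH ltac:(lia) (p j) ltac:(lra)).
      pose proof (Hmon (p j) (p (S j)) ltac:(lra) ltac:(lra) ltac:(lra)).
      destruct (Rle_dec s (p j)).
      + pose proof (IH ltac:(lia) s ltac:(lra)). lra.
      + pose proof (Hmon (p j) s ltac:(lra) ltac:(lra) ltac:(lra)).
        pose proof (Hmon s (p (S j)) ltac:(lra) ltac:(lra) ltac:(lra)). lra. }
  intros s Hs. rewrite <- Hpk. apply Hj; [lia | now rewrite Hpk].
Qed.

(** * The inverse speed and its smoothings *)

Definition pos_part (x : R) : R := Rmax 0 x.
Definition neg_part (x : R) : R := Rmax 0 (- x).

Lemma pos_part_sub_neg_part x : pos_part x - neg_part x = x.
Proof. unfold pos_part, neg_part, Rmax. repeat destruct Rle_dec; lra. Qed.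

Lemma pos_part_ge0 x : 0 <= pos_part x.
Proof. apply Rmax_l. Qed.

Lemma neg_part_ge0 x : 0 <= neg_part x.
Proof. apply Rmax_l. Qed.

Section InverseSpeed.
Variables (b r : nat -> R).

Lemma bp_count_le k x : (bp_count k b x <= k)%nat.
Proof. induction k; simpl; auto. destruct Rlt_dec; lia. Qed.

Lemma bp_index_lt k x j : bp_index k b x = Some j -> (j < k)%nat.
Proof.
  induction k as [|k IH]; simpl; [discriminate|].
  destruct Req_EM_T; [intros [=]; lia | intros H; specialize (IH H); lia].
Qed.

Lemma bp_count_all k x : (forall j, (j < k)%nat -> b j < x) -> bp_count k b x = k.
Proof.
  induction k as [|k IH]; intros H; simpl; auto. rewrite IH by (intros; apply H; lia).
  destruct Rlt_dec as [|Hn]; [lia | exfalso; apply Hn, H; lia].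
Qed.

Lemma bp_index_none k x : (forall j, (j < k)%nat -> x <> b j) -> bp_index k b x = None.
Proof.
  induction k as [|k IH]; intros H; simpl; auto.
  destruct Req_EM_T; [exfalso; apply (H k); auto | apply IH; intros; apply H; lia].
Qed.

Lemma breakpoints_increasing n : (forall j, (S j < n)%nat -> b j < b (S j)) ->
  forall i j, (i < j)%nat -> (j < n)%nat -> b i < b j.
Proof.
  intros H i j Hij Hj. induction j as [|j IH]; [lia|].
  destruct (Nat.eq_dec i j) as [->|]; [apply H; lia|].
  pose proof (IH ltac:(lia) ltac:(lia)). pose proof (H j ltac:(lia)). lra.
Qed.

Lemma step_speed_pos n x : is_step_speed_data n b r -> 0 < step_speed n b r x.
Proof.
  intros [_ Hr]. unfold step_speed. destruct (bp_index n b x) eqn:E.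
  - apply bp_index_lt in E. apply Rmin_glb_lt; apply Hr; lia.
  - apply Hr, bp_count_le.
Qed.

Definition inv_jump (j : nat) : R := / r (S j) - / r j.

(* At a breakpoint the speed is the smaller rate, so upward jumps of [1/c]
   are taken with [<=] and downward ones with [<]. *)
Fixpoint inv_speed_sum (k : nat) (x : R) : R :=
  match k with
  | O => / r 0
  | S j => inv_speed_sum j x + pos_part (inv_jump j) * (if Rle_dec (b j) x then 1 else 0)
                             - neg_part (inv_jump j) * (if Rlt_dec (b j) x then 1 else 0)
  end.

Lemma step_speed_above n k x : is_step_speed_data n b r -> (k < n)%nat -> b k <= x ->
  step_speed k b r x = r k.
Proof.
  intros [Hb _] Hk Hx. unfold step_speed.
  rewrite bp_index_none, bp_count_all; auto;
    intros j Hj; pose proof (breakpoints_increasing n Hb j k Hj Hk); lra.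
Qed.

Lemma inv_step_speed_sum n : is_step_speed_data n b r -> forall k, (k <= n)%nat ->
  forall x, / step_speed k b r x = inv_speed_sum k x.
Proof.
  intros Hd. pose proof Hd as [Hb Hr]. induction k as [|k IH]; intros Hk x; [reflexivity|].
  assert (Hr1 : 0 < r k) by (apply Hr; lia).
  assert (Hr2 : 0 < r (S k)) by (apply Hr; lia).
  cbn [inv_speed_sum]. rewrite <- IH by lia.
  unfold step_speed at 1. cbn [bp_index bp_count].
  pose proof (pos_part_sub_neg_part (inv_jump k)).
  destruct (Req_EM_T x (b k)) as [->|E].
  - rewrite (step_speed_above n k (b k)) by (auto; lia || lra).
    destruct (Rle_dec (b k) (b k)); [|lra]. destruct (Rlt_dec (b k) (b k)); [lra|].
    unfold pos_part, inv_jump, Rmin, Rmax in *. destruct Rle_dec; destruct Rle_dec;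
      first [ assert (/ r (S k) <= / r k) by (apply Rinv_le_contravar; lra); lra
            | assert (/ r k < / r (S k)) by (apply Rinv_lt_contravar; nra); lra ].
  - destruct (Rlt_dec (b k) x) as [L|L].
    + rewrite (step_speed_above n k x) by (auto; lia || lra).
      rewrite bp_index_none, bp_count_all;
        try (intros j Hj; pose proof (breakpoints_increasing n Hb j k Hj ltac:(lia)); lra).
      destruct (Rle_dec (b k) x); [|lra].
      replace (k + 1)%nat with (S k) by lia. unfold inv_jump in *. lra.
    + destruct (Rle_dec (b k) x); [lra|].
      rewrite Nat.add_0_r. unfold step_speed. ring.
Qed.

Fixpoint inv_speed_bound (k : nat) : R :=
  match k with O => / r 0 | S j => inv_speed_bound j + pos_part (inv_jump j) end.

Lemma inv_speed_sum_le_bound k x : inv_speed_sum k x <= inv_speed_bound k.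
Proof.
  induction k as [|k IH]; simpl; [lra|].
  pose proof (pos_part_ge0 (inv_jump k)). pose proof (neg_part_ge0 (inv_jump k)).
  destruct Rle_dec; destruct Rlt_dec; nra.
Qed.

Lemma inv_speed_bound_ge0 k : 0 < r 0%nat -> 0 <= inv_speed_bound k.
Proof.
  intros H. induction k as [|k IH]; simpl; [left; apply Rinv_0_lt_compat; auto|].
  pose proof (pos_part_ge0 (inv_jump k)). lra.
Qed.

End InverseSpeed.

Definition clamp01_prim (x : R) : R :=
  if Rle_dec x 0 then 0 else if Rle_dec x 1 then x * x / 2 else x - 1 / 2.

Lemma clamp01_cases x : clamp01 x = if Rle_dec x 0 then 0 else if Rle_dec x 1 then x else 1.
Proof. unfold clamp01, Rmax, Rmin. repeat destruct Rle_dec; lra. Qed.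

Lemma derivable_clamp01_prim x : derivable_pt_lim clamp01_prim x (clamp01 x).
Proof.
  intros eps He. exists (mkposreal eps He). intros h Hh Hhe. simpl in Hhe.
  assert (Hq : Rabs (clamp01_prim (x + h) - clamp01_prim x - h * clamp01 x) <= h * h / 2).
  { rewrite clamp01_cases. unfold clamp01_prim.
    repeat destruct Rle_dec; unfold Rabs; destruct Rcase_abs; nra. }
  assert (Hpos : 0 < Rabs h) by (apply Rabs_pos_lt; auto).
  replace ((clamp01_prim (x + h) - clamp01_prim x) / h - clamp01 x)
    with ((clamp01_prim (x + h) - clamp01_prim x - h * clamp01 x) / h) by (field; auto).
  unfold Rdiv. rewrite Rabs_mult, Rabs_inv.
  apply Rle_lt_trans with (h * h / 2 * / Rabs h).
  - apply Rmult_le_compat_r; auto. left; apply Rinv_0_lt_compat; auto.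
  - replace (h * h) with (Rabs h * Rabs h) by (rewrite <- Rabs_mult; apply Rabs_right; nra).
    replace (Rabs h * Rabs h / 2 * / Rabs h) with (Rabs h / 2) by (field; lra). lra.
Qed.

Lemma clamp01_prim_increment x t : 0 <= t -> 0 <= clamp01_prim (x + t) - clamp01_prim x <= t.
Proof. intros Ht. unfold clamp01_prim. repeat destruct Rle_dec; nra. Qed.

Lemma clamp01_eq1 x : 1 <= x -> clamp01 x = 1.
Proof. intros. rewrite clamp01_cases. repeat destruct Rle_dec; lra. Qed.

Lemma clamp01_eq0 x : x <= 0 -> clamp01 x = 0.
Proof. intros. rewrite clamp01_cases. repeat destruct Rle_dec; lra. Qed.

Section Smoothing.
Variables (b r : nat -> R) (dd : R).
Hypothesis Hdd : 0 < dd.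

Definition ramp (a v : R) : R := clamp01 ((v - a) / dd).
Definition ramp_prim (a v : R) : R := dd * clamp01_prim ((v - a) / dd).

Lemma continuity_ramp a : continuity (ramp a).
Proof.
  intros v. apply (continuity_pt_locally_ext (comp clamp01 (fun v => / dd * v + - a / dd)) _ 1);
    [lra | intros y _; unfold comp, ramp; f_equal; field; lra|].
  apply continuity_pt_comp; [apply continuity_affine | apply continuity_clamp01].
Qed.

Lemma derivable_ramp_prim a v : derivable_pt_lim (ramp_prim a) v (ramp a v).
Proof.
  apply (derivable_pt_lim_ext
           (mult_real_fct dd (comp clamp01_prim (fun v => / dd * v + - a / dd)))).
  { intros y. unfold mult_real_fct, comp, ramp_prim. do 2 f_equal. field. lra. }
  replace (ramp a v) with (dd * (clamp01 (/ dd * v + - a / dd) * / dd))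
    by (unfold ramp; replace ((v - a) / dd) with (/ dd * v + - a / dd) by (field; lra); field; lra).
  apply derivable_pt_lim_scal, derivable_pt_lim_comp;
    [apply derivable_pt_lim_affine | apply derivable_clamp01_prim].
Qed.

Lemma ramp_eq0 a v : v <= a -> ramp a v = 0.
Proof.
  intros H. apply clamp01_eq0. apply Rmult_le_reg_r with dd; auto.
  unfold Rdiv. rewrite Rmult_assoc, Rinv_l by lra. lra.
Qed.

Lemma ramp_eq1 a v : a + dd <= v -> ramp a v = 1.
Proof.
  intros H. apply clamp01_eq1. apply Rmult_le_reg_r with dd; auto.
  unfold Rdiv. rewrite Rmult_assoc, Rinv_l by lra. lra.
Qed.

Lemma ramp_range a v : 0 <= ramp a v <= 1.
Proof. apply clamp01_range. Qed.

Fixpoint smoothed (s1 s2 : R) (k : nat) (v : R) : R :=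
  match k with
  | O => / r 0
  | S j => smoothed s1 s2 j v + pos_part (inv_jump r j) * ramp (b j + s1) v
                              - neg_part (inv_jump r j) * ramp (b j + s2) v
  end.

Fixpoint smoothed_prim (s1 s2 : R) (k : nat) (v : R) : R :=
  match k with
  | O => / r 0 * v
  | S j => smoothed_prim s1 s2 j v + pos_part (inv_jump r j) * ramp_prim (b j + s1) v
                                   - neg_part (inv_jump r j) * ramp_prim (b j + s2) v
  end.

Lemma continuity_smoothed s1 s2 k : continuity (smoothed s1 s2 k).
Proof.
  induction k as [|k IH]; simpl; [apply continuity_const; intros x y; auto|].
  apply continuity_minus; [apply continuity_plus; auto|];
    apply continuity_scal, continuity_ramp.
Qed.

Lemma derivable_smoothed_prim s1 s2 k v :
  derivable_pt_lim (smoothed_prim s1 s2 k) v (smoothed s1 s2 k v).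
Proof.
  induction k as [|k IH]; simpl.
  - apply (derivable_pt_lim_ext (fun x => / r 0 * x + 0)); [intros; ring|].
    apply derivable_pt_lim_affine.
  - apply derivable_pt_lim_minus; [apply derivable_pt_lim_plus; auto|];
      apply derivable_pt_lim_scal, derivable_ramp_prim.
Qed.

Lemma inv_speed_sum_le_smoothed k v t : 0 <= t <= dd ->
  inv_speed_sum b r k (v - t) <= smoothed (- dd) dd k v.
Proof.
  intros Ht. induction k as [|k IH]; simpl; [lra|].
  pose proof (pos_part_ge0 (inv_jump r k)). pose proof (neg_part_ge0 (inv_jump r k)).
  pose proof (ramp_range (b k + - dd) v). pose proof (ramp_range (b k + dd) v).
  assert ((if Rle_dec (b k) (v - t) then 1 else 0) <= ramp (b k + - dd) v).
  { destruct Rle_dec; [rewrite ramp_eq1|]; lra. }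
  assert (ramp (b k + dd) v <= (if Rlt_dec (b k) (v - t) then 1 else 0)).
  { destruct Rlt_dec; [|rewrite ramp_eq0]; lra. }
  nra.
Qed.

Lemma smoothed_le_inv_speed_sum k v : smoothed 0 (- dd) k v <= inv_speed_sum b r k v.
Proof.
  induction k as [|k IH]; simpl; [lra|].
  pose proof (pos_part_ge0 (inv_jump r k)). pose proof (neg_part_ge0 (inv_jump r k)).
  pose proof (ramp_range (b k + 0) v). pose proof (ramp_range (b k + - dd) v).
  assert (ramp (b k + 0) v <= (if Rle_dec (b k) v then 1 else 0)).
  { destruct Rle_dec; [|rewrite ramp_eq0]; lra. }
  assert ((if Rlt_dec (b k) v then 1 else 0) <= ramp (b k + - dd) v).
  { destruct Rlt_dec; [rewrite ramp_eq1|]; lra. }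
  nra.
Qed.

(* Where the two smoothings differ, around each breakpoint, they do so on a window
   of width [2 dd] for an upward jump of [1/c] and [dd] for a downward one. *)
Fixpoint smoothing_defect (k : nat) : R :=
  match k with
  | O => / r 0
  | S j => smoothing_defect j + 2 * pos_part (inv_jump r j) + neg_part (inv_jump r j)
  end.

Lemma smoothing_defect_ge0 k : 0 < r 0%nat -> 0 <= smoothing_defect k.
Proof.
  intros H. induction k as [|k IH]; simpl; [left; apply Rinv_0_lt_compat; auto|].
  pose proof (pos_part_ge0 (inv_jump r k)). pose proof (neg_part_ge0 (inv_jump r k)). lra.
Qed.

Lemma smoothed_prim_gap k Z A :
  smoothed_prim (- dd) dd k (Z + dd) - smoothed_prim (- dd) dd k A
  - (smoothed_prim 0 (- dd) k Z - smoothed_prim 0 (- dd) k A) <= dd * smoothing_defect k.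
Proof.
  induction k as [|k IH]; simpl; [nra|]. unfold ramp_prim.
  set (Y := (Z - b k) / dd). set (X := (A - b k) / dd).
  replace ((Z + dd - (b k + - dd)) / dd) with (Y + 2) by (unfold Y; field; lra).
  replace ((A - (b k + - dd)) / dd) with (X + 1) by (unfold X; field; lra).
  replace ((Z + dd - (b k + dd)) / dd) with Y by (unfold Y; field; lra).
  replace ((A - (b k + dd)) / dd) with (X - 1) by (unfold X; field; lra).
  replace ((Z - (b k + 0)) / dd) with Y by (unfold Y; field; lra).
  replace ((A - (b k + 0)) / dd) with X by (unfold X; field; lra).
  replace ((Z - (b k + - dd)) / dd) with (Y + 1) by (unfold Y; field; lra).
  pose proof (pos_part_ge0 (inv_jump r k)). pose proof (neg_part_ge0 (inv_jump r k)).
  pose proof (clamp01_prim_increment Y 2 ltac:(lra)).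
  pose proof (clamp01_prim_increment X 1 ltac:(lra)).
  pose proof (clamp01_prim_increment Y 1 ltac:(lra)).
  pose proof (clamp01_prim_increment (X - 1) 2 ltac:(lra)).
  replace (X - 1 + 2) with (X + 1) in * by ring.
  assert (pos_part (inv_jump r k) * (dd * ((clamp01_prim (Y + 2) - clamp01_prim Y)
            - (clamp01_prim (X + 1) - clamp01_prim X))) <= pos_part (inv_jump r k) * (dd * 2)).
  { apply Rmult_le_compat_l; auto. apply Rmult_le_compat_l; lra. }
  assert (neg_part (inv_jump r k) * (dd * ((clamp01_prim (Y + 1) - clamp01_prim Y)
            - (clamp01_prim (X + 1) - clamp01_prim (X - 1))))
          <= neg_part (inv_jump r k) * (dd * 1)).
  { apply Rmult_le_compat_l; auto. apply Rmult_le_compat_l; lra. }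
  nra.
Qed.

End Smoothing.

(** * Path values *)

Definition affine2 (a1 a2 k x y : R) : R := a1 * x + a2 * y + k.

Definition lin_potential (F : R -> R) (a1 a2 k be1 be2 x y : R) : R :=
  F (affine2 a1 a2 k x y) + affine2 be1 be2 0 x y.

Lemma continuity_affine2 a1 a2 k e1 e2 : continuity e1 -> continuity e2 ->
  continuity (fun s => affine2 a1 a2 k (e1 s) (e2 s)).
Proof.
  intros H1 H2. unfold affine2.
  apply continuity_plus; [apply continuity_plus; apply continuity_scal; auto|].
  apply continuity_const. intros x y. reflexivity.
Qed.

Lemma derivable_affine2 a1 a2 k e1 e2 s l1 l2 :
  derivable_pt_lim e1 s l1 -> derivable_pt_lim e2 s l2 ->
  derivable_pt_lim (fun s => affine2 a1 a2 k (e1 s) (e2 s)) s (affine2 a1 a2 0 l1 l2).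
Proof.
  intros H1 H2. unfold affine2. rewrite Rplus_0_r.
  apply (derivable_pt_lim_ext
           (plus_fct (plus_fct (mult_real_fct a1 e1) (mult_real_fct a2 e2)) (fct_cte k)));
    [intros; reflexivity|].
  rewrite <- (Rplus_0_r (a1 * l1 + a2 * l2)).
  apply derivable_pt_lim_plus; [|apply derivable_pt_lim_const].
  apply derivable_pt_lim_plus; apply derivable_pt_lim_scal; auto.
Qed.

Lemma continuity_lin_potential F a1 a2 k be1 be2 e1 e2 :
  continuity F -> continuity e1 -> continuity e2 ->
  continuity (fun s => lin_potential F a1 a2 k be1 be2 (e1 s) (e2 s)).
Proof.
  intros HF H1 H2. unfold lin_potential.
  apply continuity_plus; [|apply continuity_affine2; auto].
  apply (continuity_comp (fun s => affine2 a1 a2 k (e1 s) (e2 s)) F); auto.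
  apply continuity_affine2; auto.
Qed.

Lemma upper_integral01_path_le F Fd a1 a2 k be1 be2 f x1 x2 d1 d2 :
  (forall v, derivable_pt_lim F v (Fd v)) -> continuity Fd ->
  admissible_path x1 x2 d1 d2 ->
  (forall s, 0 < s < 1 -> inW (d1 s) (d2 s) ->
     f s <= Fd (affine2 a1 a2 k (x1 s) (x2 s)) * affine2 a1 a2 0 (d1 s) (d2 s)
            + affine2 be1 be2 0 (d1 s) (d2 s)) ->
  forall v, upper_integral01 f v ->
  v <= lin_potential F a1 a2 k be1 be2 (x1 1) (x2 1)
       - lin_potential F a1 a2 k be1 be2 (x1 0) (x2 0).
Proof.
  intros HF HFd (C1 & C2 & m & p & Hp & Hpc) Hf.
  assert (HFc : continuity F)
    by (intros x; exact (derivable_continuous_pt _ _ (exist _ _ (HF x)))).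
  set (X1 := fun s => x1 (clamp01 s)). set (X2 := fun s => x2 (clamp01 s)).
  assert (CX1 : continuity X1) by (apply continuity_clamp01_comp; auto).
  assert (CX2 : continuity X2) by (apply continuity_clamp01_comp; auto).
  apply (upper_integral01_le_increment f
           (fun s => lin_potential F a1 a2 k be1 be2 (x1 s) (x2 s)) m p Hp).
  { apply cont_on01_of_clamp01_comp, (continuity_lin_potential F a1 a2 k be1 be2 X1 X2); auto. }
  intros i Hi. destruct (Hpc i Hi) as (Hd & e1 & e2 & Ce1 & Ce2 & Ee).
  exists (fun s => Fd (affine2 a1 a2 k (X1 s) (X2 s)) * affine2 a1 a2 0 (e1 s) (e2 s)
                   + affine2 be1 be2 0 (e1 s) (e2 s)).
  split.
  { apply continuity_plus; [apply continuity_mult|]; try apply continuity_affine2; auto.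
    apply (continuity_comp (fun s => affine2 a1 a2 k (X1 s) (X2 s)) Fd); auto.
    apply continuity_affine2; auto. }
  intros s Hs. pose proof (partition01_range m p Hp i ltac:(lia)).
  pose proof (partition01_range m p Hp (S i) ltac:(lia)).
  destruct (Hd s Hs) as (D1 & D2 & HW). destruct (Ee s Hs) as [-> ->].
  unfold X1, X2. rewrite clamp01_id by lra. split; [|apply Hf; auto; lra].
  unfold lin_potential. apply derivable_pt_lim_plus; [|apply derivable_affine2; auto].
  apply (derivable_pt_lim_comp (fun s => affine2 a1 a2 k (x1 s) (x2 s)) F).
  - apply derivable_affine2; auto.
  - apply HF.
Qed.

Definition partition01_trivial (i : nat) : R := match i with O => 0 | _ => 1 end.

Lemma is_partition01_trivial : is_partition01 1 partition01_trivial.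
Proof. repeat split. intros [|i] Hi; simpl; lra || lia. Qed.

Lemma straight_path_admissible P1 P2 Q1 Q2 : inW (Q1 - P1) (Q2 - P2) ->
  admissible_path (fun s => (Q1 - P1) * s + P1) (fun s => (Q2 - P2) * s + P2)
                  (fun _ => Q1 - P1) (fun _ => Q2 - P2).
Proof.
  intros HW. split; [|split]; [apply cont_on01_of_continuity, continuity_affine ..|].
  exists 1%nat, partition01_trivial. split; [apply is_partition01_trivial|].
  intros i Hi. split.
  - intros s Hs. repeat split; try apply derivable_pt_lim_affine; apply HW.
  - exists (fun _ => Q1 - P1), (fun _ => Q2 - P2).
    repeat split; apply continuity_const; intros x y; auto.
Qed.

Lemma rsum_ge0 k g : (forall i, (i < k)%nat -> 0 <= g i) -> 0 <= rsum k g.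
Proof.
  induction k as [|k IH]; intros H; simpl; [lra|].
  pose proof (H k ltac:(lia)). pose proof (IH ltac:(intros; apply H; lia)). lra.
Qed.

Lemma upper_integral01_exists f B : (forall s, 0 <= f s) -> (forall s, 0 <= s <= 1 -> f s <= B) ->
  exists v, upper_integral01 f v.
Proof.
  intros Hf HB.
  destruct (completeness (fun y => upper_sums f (- y))) as (m & Hm1 & Hm2).
  - exists 0. intros y (k & p & M & (_ & _ & Hp) & HM & HU).
    assert (0 <= - y); [|lra]. rewrite HU. apply rsum_ge0. intros i Hi.
    pose proof (Hp i Hi). pose proof (HM i Hi (p i) ltac:(lra)). pose proof (Hf (p i)). nra.
  - exists (- B). rewrite Ropp_involutive.
    exists 1%nat, partition01_trivial, (fun _ => B). split; [apply is_partition01_trivial|].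
    split; [|simpl; ring].
    intros [|i] Hi s Hs; [apply HB; simpl in Hs; lra | lia].
  - exists (- m). split.
    + intros U HU. assert (- U <= m); [|lra]. apply Hm1. now rewrite Ropp_involutive.
    + intros l Hl. assert (m <= - l); [|lra]. apply Hm2. intros y Hy. pose proof (Hl _ Hy). lra.
Qed.

(* AM-GM: [2 sqrt(u y) <= e u + y / e]. *)
Lemma sqrt_sum_sq_le u y e : 0 <= u -> 0 <= y -> 0 < e ->
  (sqrt u + sqrt y) ^ 2 <= (1 + e) * u + (1 + / e) * y.
Proof.
  intros Hu Hy He.
  rewrite <- (sqrt_sqrt u Hu) at 2. rewrite <- (sqrt_sqrt y Hy) at 2.
  pose proof (sqrt_pos u). pose proof (sqrt_pos y).
  set (A := sqrt u) in *. set (B := sqrt y) in *.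
  assert (0 <= / e * (e * A - B) ^ 2)
    by (apply Rmult_le_pos; [left; apply Rinv_0_lt_compat | apply pow2_ge_0]; auto).
  replace (/ e * (e * A - B) ^ 2) with (e * (A * A) - 2 * A * B + / e * (B * B)) in H1
    by (field; lra).
  nra.
Qed.

Lemma sqrt_sum_sq_weighted_le u y e Dv ps Dmax : 0 <= u -> 0 <= y -> 0 < e ->
  0 < Dv -> Dv <= ps -> Dv <= Dmax ->
  (sqrt u + sqrt y) ^ 2 * Dv <= u * ps + Dmax * (e * u + (1 + / e) * y).
Proof.
  intros Hu Hy He HD Hps HDm.
  pose proof (sqrt_sum_sq_le u y e Hu Hy He).
  assert (Hie : 0 < / e) by (apply Rinv_0_lt_compat; auto).
  assert ((sqrt u + sqrt y) ^ 2 * Dv <= ((1 + e) * u + (1 + / e) * y) * Dv)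
    by (apply Rmult_le_compat_r; lra).
  assert (u * Dv <= u * ps) by (apply Rmult_le_compat_l; lra).
  assert ((e * u + (1 + / e) * y) * Dv <= (e * u + (1 + / e) * y) * Dmax).
  { apply Rmult_le_compat_l; [|lra].
    pose proof (Rmult_le_pos e u ltac:(lra) Hu).
    pose proof (Rmult_le_pos (/ e) y ltac:(lra) Hy). lra. }
  nra.
Qed.

Lemma gamma_ge0 x y : 0 <= gamma x y.
Proof. apply pow2_ge_0. Qed.

Lemma gamma_horizontal x : 0 <= x -> gamma x 0 = x.
Proof.
  intros. unfold gamma. rewrite Rplus_0_r, sqrt_0, Rplus_0_r, pow2_sqrt; auto.
Qed.

Lemma gamma_antidiagonal y : 0 <= y -> gamma (- y) y = y.
Proof.
  intros. unfold gamma. replace (- y + y) with 0 by ring.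
  rewrite sqrt_0, Rplus_0_l, pow2_sqrt; auto.
Qed.

Lemma sqrt_unit_interval_facts d : 0 < d <= 1 ->
  0 < sqrt d /\ sqrt d * sqrt d = d /\ d <= sqrt d /\ sqrt d <= 1 /\ / sqrt d * d = sqrt d.
Proof.
  intros Hd. assert (H1 : 0 < sqrt d) by (apply sqrt_lt_R0; lra).
  assert (H2 : sqrt d * sqrt d = d) by (apply sqrt_sqrt; lra).
  assert (H3 : sqrt d <= 1) by (rewrite <- sqrt_1; apply sqrt_le_1_alt; lra).
  repeat split; auto; [nra | rewrite <- H2 at 2; field; lra].
Qed.

(* The functionals [a1 x + a2 y] with [0 <= a1 <= a2] are exactly those
   nonnegative on the cone [W]. *)
Lemma admissible_path_affine_monotone a1 a2 x1 x2 d1 d2 : 0 <= a1 <= a2 ->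
  admissible_path x1 x2 d1 d2 -> forall s, 0 <= s <= 1 ->
  affine2 a1 a2 0 (x1 0) (x2 0) <= affine2 a1 a2 0 (x1 s) (x2 s) <= affine2 a1 a2 0 (x1 1) (x2 1).
Proof.
  intros Ha (C1 & C2 & k & p & Hp & Hpc).
  apply (piecewise_nondecreasing (fun s => affine2 a1 a2 0 (x1 s) (x2 s))
           (fun s => affine2 a1 a2 0 (d1 s) (d2 s)) k p Hp).
  - apply cont_on01_of_clamp01_comp, continuity_affine2; apply continuity_clamp01_comp; auto.
  - intros i Hi s Hs. destruct (proj1 (Hpc i Hi) s Hs) as (D1 & D2 & W1 & W2).
    split; [apply derivable_affine2; auto|]. unfold affine2. nra.
Qed.

Section Gamma.
Variables (n : nat) (b r : nat -> R) (q : R).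
Hypothesis Hdat : is_step_speed_data n b r.

Let c := step_speed n b r.
Let D := inv_speed_bound r n.
Let K := smoothing_defect r n.

Lemma inv_speed_pos x : 0 < / c x.
Proof. apply Rinv_0_lt_compat, step_speed_pos, Hdat. Qed.

Lemma inv_speed_eq x : / c x = inv_speed_sum b r n x.
Proof. apply (inv_step_speed_sum b r n Hdat n (le_n n)). Qed.

Lemma inv_speed_le x : / c x <= D.
Proof. rewrite inv_speed_eq. apply inv_speed_sum_le_bound. Qed.

Lemma path_value_le P Q v : path_value c q P Q v ->
  v <= D * (2 * (fst Q - fst P) + 4 * (snd Q - snd P)).
Proof.
  intros (x1 & x2 & d1 & d2 & Ha & E1 & E2 & E3 & E4 & Hv).
  assert (Hb := upper_integral01_path_le (fun _ => 0) (fun _ => 0) 0 0 0 (2 * D) (4 * D)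
     (fun s => gamma (d1 s) (d2 s) / c (x1 s - q)) x1 x2 d1 d2 (fun v => derivable_pt_lim_const 0 v)
     (continuity_const (fun _ : R => 0) (fun x y => eq_refl)) Ha).
  unfold lin_potential, affine2 in Hb. rewrite E1, E2, E3, E4 in Hb.
  assert (v <= 0 + (2 * D * fst Q + 4 * D * snd Q + 0) - (0 + (2 * D * fst P + 4 * D * snd P + 0)));
    [|lra].
  apply Hb; auto. intros s _ [W1 W2]. unfold gamma, Rdiv.
  pose proof (sqrt_sum_sq_weighted_le (d1 s + d2 s) (d2 s) 1 (/ c (x1 s - q)) D D
    ltac:(lra) W1 ltac:(lra) (inv_speed_pos _) (inv_speed_le _) (inv_speed_le _)).
  rewrite Rinv_1 in H. lra.
Qed.

Lemma Gamma_exists_ge_straight P1 P2 Q1 Q2 : inW (Q1 - P1) (Q2 - P2) ->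
  exists G v0, is_Gamma c q (P1, P2) (Q1, Q2) G /\
    upper_integral01 (fun s => gamma (Q1 - P1) (Q2 - P2) / c ((Q1 - P1) * s + P1 - q)) v0 /\
    v0 <= G.
Proof.
  intros HW. set (g := gamma (Q1 - P1) (Q2 - P2)).
  destruct (upper_integral01_exists (fun s => g / c ((Q1 - P1) * s + P1 - q)) (g * D))
    as (v0 & Hv0).
  - intros s. apply Rmult_le_pos; [apply gamma_ge0 | left; apply inv_speed_pos].
  - intros s _. apply Rmult_le_compat_l; [apply gamma_ge0 | apply inv_speed_le].
  - assert (Hpv : path_value c q (P1, P2) (Q1, Q2) v0).
    { exists (fun s => (Q1 - P1) * s + P1), (fun s => (Q2 - P2) * s + P2),
        (fun _ => Q1 - P1), (fun _ => Q2 - P2).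
      split; [apply straight_path_admissible; auto|]. simpl. do 4 (split; [ring|]). exact Hv0. }
    destruct (completeness (path_value c q (P1, P2) (Q1, Q2))) as (G & HG).
    + exists (D * (2 * (Q1 - P1) + 4 * (Q2 - P2))). intros y Hy. exact (path_value_le _ _ _ Hy).
    + exists v0; auto.
    + exists G, v0. split; [exact HG|]. split; [exact Hv0|]. apply HG, Hpv.
Qed.

Lemma straight_value_ge dd sg m1 c1 f v : 0 < dd -> 0 <= sg * m1 ->
  (forall s, sg * m1 * / c (m1 * s + c1 - q) <= f s) -> upper_integral01 f v ->
  sg * smoothed_prim b r dd 0 (- dd) n (m1 + c1 - q)
  - sg * smoothed_prim b r dd 0 (- dd) n (c1 - q) <= v.
Proof.
  intros Hdd Hsm Hf Hv.
  set (Phi := smoothed_prim b r dd 0 (- dd) n). set (phi := smoothed b r dd 0 (- dd) n).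
  assert (Hd : forall s, derivable_pt_lim (fun s => sg * Phi (m1 * s + (c1 - q))) s
                   (sg * (phi (m1 * s + (c1 - q)) * m1))).
  { intros s. apply derivable_pt_lim_scal.
    apply (derivable_pt_lim_comp (fun s => m1 * s + (c1 - q)) Phi);
      [apply derivable_pt_lim_affine | apply (derivable_smoothed_prim b r dd Hdd)]. }
  replace (Phi (m1 + c1 - q)) with (Phi (m1 * 1 + (c1 - q))) by (f_equal; ring).
  replace (Phi (c1 - q)) with (Phi (m1 * 0 + (c1 - q))) by (f_equal; ring).
  apply (increment_le_upper_integral01 f (fun s => sg * Phi (m1 * s + (c1 - q)))
           (fun s => sg * (phi (m1 * s + (c1 - q)) * m1))); auto.
  - apply cont_on01_of_continuity. intros s. exact (derivable_continuous_pt _ _ (exist _ _ (Hd s))).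
  - intros s _. split; auto. specialize (Hf s). rewrite inv_speed_eq in Hf.
    replace (m1 * s + c1 - q) with (m1 * s + (c1 - q)) in Hf by ring.
    pose proof (smoothed_le_inv_speed_sum b r dd Hdd n (m1 * s + (c1 - q))) as Hphi.
    fold phi in Hphi.
    pose proof (Rmult_le_compat_l _ _ _ Hsm Hphi). nra.
Qed.

Lemma Gamma_vertical_le z a delta G : 0 < delta -> is_Gamma c q (a, 0) (z, delta) G ->
  G <= smoothed_prim b r delta (- delta) delta n (z - q + delta)
       - smoothed_prim b r delta (- delta) delta n (a - q)
       + D * sqrt delta * (z - a) + D * (sqrt delta + (1 + / sqrt delta)) * delta.
Proof.
  intros Hd HG. assert (He : 0 < sqrt delta) by (apply sqrt_lt_R0; lra).
  set (e := sqrt delta) in *.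
  set (pot := lin_potential (smoothed_prim b r delta (- delta) delta n) 1 1 (- q)
                (D * e) (D * (e + (1 + / e)))).
  enough (Hpot : G <= pot z delta - pot a 0).
  { unfold pot, lin_potential, affine2 in Hpot.
    replace (1 * z + 1 * delta + - q) with (z - q + delta) in Hpot by ring.
    replace (1 * a + 1 * 0 + - q) with (a - q) in Hpot by ring. lra. }
  apply (proj2 HG). intros v (x1 & x2 & d1 & d2 & Had & E1 & E2 & E3 & E4 & Hv).
  simpl in E1, E2, E3, E4.
  enough (Hv' : v <= pot (x1 1) (x2 1) - pot (x1 0) (x2 0)) by now rewrite E1, E2, E3, E4 in Hv'.
  apply (upper_integral01_path_le _ (smoothed b r delta (- delta) delta n) 1 1 (- q)
    (D * e) (D * (e + (1 + / e))) (fun s => gamma (d1 s) (d2 s) / c (x1 s - q)) x1 x2 d1 d2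
    (derivable_smoothed_prim b r delta Hd _ _ n) (continuity_smoothed b r delta Hd _ _ n) Had);
    auto.
  intros s Hs [W1 W2]. unfold affine2.
  pose proof (admissible_path_affine_monotone 0 1 x1 x2 d1 d2 ltac:(lra) Had s ltac:(lra)) as Hx2.
  unfold affine2 in Hx2. rewrite E2, E4 in Hx2.
  assert (Hmaj : / c (x1 s - q)
                 <= smoothed b r delta (- delta) delta n (1 * x1 s + 1 * x2 s + - q)).
  { rewrite inv_speed_eq. replace (x1 s - q) with ((1 * x1 s + 1 * x2 s + - q) - x2 s) by ring.
    apply inv_speed_sum_le_smoothed; lra. }
  pose proof (sqrt_sum_sq_weighted_le (d1 s + d2 s) (d2 s) e (/ c (x1 s - q)) _ D
    ltac:(lra) W1 He (inv_speed_pos _) Hmaj (inv_speed_le _)).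
  unfold gamma, Rdiv. lra.
Qed.

Lemma Gamma_diagonal_le w b0 delta G : 0 < delta ->
  is_Gamma c q (- b0, b0) (- w, w + delta) G ->
  G <= smoothed_prim b r delta (- delta) delta n (- b0 - q + delta)
       - smoothed_prim b r delta (- delta) delta n (- w - q)
       + D * (1 + / sqrt delta) * (b0 - w)
       + D * (sqrt delta + (1 + / sqrt delta)) * (w + delta - b0).
Proof.
  intros Hd HG. assert (He : 0 < sqrt delta) by (apply sqrt_lt_R0; lra).
  set (e := sqrt delta) in *.
  set (Psi := smoothed_prim b r delta (- delta) delta n).
  set (psi := smoothed b r delta (- delta) delta n).
  set (pot := lin_potential (fun v => - Psi v) 0 (-1) (delta - q)
                (D * (1 + / e)) (D * (e + (1 + / e)))).
  enough (Hpot : G <= pot (- w) (w + delta) - pot (- b0) b0).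
  { unfold pot, lin_potential, affine2 in Hpot.
    replace (0 * - w + -1 * (w + delta) + (delta - q)) with (- w - q) in Hpot by ring.
    replace (0 * - b0 + -1 * b0 + (delta - q)) with (- b0 - q + delta) in Hpot by ring. lra. }
  apply (proj2 HG). intros v (x1 & x2 & d1 & d2 & Had & E1 & E2 & E3 & E4 & Hv).
  simpl in E1, E2, E3, E4.
  enough (Hv' : v <= pot (x1 1) (x2 1) - pot (x1 0) (x2 0)) by now rewrite E1, E2, E3, E4 in Hv'.
  apply (upper_integral01_path_le (fun v => - Psi v) (fun v => - psi v) 0 (-1) (delta - q)
    (D * (1 + / e)) (D * (e + (1 + / e))) (fun s => gamma (d1 s) (d2 s) / c (x1 s - q)) x1 x2 d1 d2
    (fun v => derivable_pt_lim_opp _ _ _ (derivable_smoothed_prim b r delta Hd _ _ n v))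
    (continuity_opp _ (continuity_smoothed b r delta Hd _ _ n)) Had); auto.
  intros s Hs [W1 W2]. unfold affine2.
  pose proof (admissible_path_affine_monotone 1 1 x1 x2 d1 d2 ltac:(lra) Had s ltac:(lra)) as Hu.
  unfold affine2 in Hu. rewrite E1, E2, E3, E4 in Hu.
  assert (Hmaj : / c (x1 s - q) <= psi (0 * x1 s + -1 * x2 s + (delta - q))).
  { rewrite inv_speed_eq.
    replace (x1 s - q)
      with ((0 * x1 s + -1 * x2 s + (delta - q)) - (delta - (x1 s + x2 s))) by ring.
    apply inv_speed_sum_le_smoothed; lra. }
  pose proof (sqrt_sum_sq_weighted_le (d2 s) (d1 s + d2 s) e (/ c (x1 s - q)) _ D
    W1 ltac:(lra) He (inv_speed_pos _) Hmaj (inv_speed_le _)).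
  unfold gamma, Rdiv. rewrite (Rplus_comm (sqrt (d1 s + d2 s))). lra.
Qed.

Lemma Gamma_vertical_increment z a delta : 0 < delta <= 1 -> 0 <= a <= z ->
  exists G1 G2, is_Gamma c q (a, 0) (z, delta) G1 /\ is_Gamma c q (a, 0) (z, 0) G2 /\
    G1 - G2 <= (K + D * (z + 3)) * sqrt delta.
Proof.
  intros Hd Ha. destruct (sqrt_unit_interval_facts delta Hd) as (He & Hee & Hde & He1 & Hinv).
  destruct (Gamma_exists_ge_straight a 0 z delta) as (G1 & v1 & HG1 & _); [split; lra|].
  destruct (Gamma_exists_ge_straight a 0 z 0) as (G2 & v2 & HG2 & Hv2 & Hv2G); [split; lra|].
  exists G1, G2. split; [exact HG1|]. split; [exact HG2|].
  pose proof (Gamma_vertical_le z a delta G1 ltac:(lra) HG1) as HG1b.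
  assert (HG2b : 1 * smoothed_prim b r delta 0 (- delta) n ((z - a) + a - q)
                 - 1 * smoothed_prim b r delta 0 (- delta) n (a - q) <= v2).
  { apply (straight_value_ge delta 1 (z - a) a
      (fun s => gamma (z - a) (0 - 0) / c ((z - a) * s + a - q)) v2); try lra; auto.
    intros s. replace (0 - 0) with 0 by ring. rewrite gamma_horizontal by lra. unfold Rdiv. lra. }
  replace (z - a + a - q) with (z - q) in HG2b by ring.
  pose proof (smoothed_prim_gap b r delta ltac:(lra) n (z - q) (a - q)) as Hgap.
  set (e := sqrt delta) in *.
  pose proof (inv_speed_bound_ge0 r n (proj2 Hdat 0%nat ltac:(lia))) as HD. fold D in HD.
  pose proof (smoothing_defect_ge0 r n (proj2 Hdat 0%nat ltac:(lia))) as HK. fold K in HK, Hgap.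
  assert (delta * K <= e * K) by (apply Rmult_le_compat_r; lra).
  assert (D * e * (z - a) <= D * e * z) by (apply Rmult_le_compat_l; nra).
  assert (D * (e * delta + delta + e) <= D * (3 * e)) by (apply Rmult_le_compat_l; nra).
  replace (D * (e + (1 + / e)) * delta) with (D * (e * delta + delta + / e * delta)) in HG1b
    by ring.
  rewrite Hinv in HG1b. nra.
Qed.

Lemma Gamma_diagonal_increment w b0 delta : 0 < delta <= 1 -> 0 <= b0 <= w ->
  exists G1 G2, is_Gamma c q (- b0, b0) (- w, w + delta) G1 /\
    is_Gamma c q (- b0, b0) (- w, w) G2 /\ G1 - G2 <= (K + D * (w + 3)) * sqrt delta.
Proof.
  intros Hd Hb. destruct (sqrt_unit_interval_facts delta Hd) as (He & Hee & Hde & He1 & Hinv).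
  destruct (Gamma_exists_ge_straight (- b0) b0 (- w) (w + delta)) as (G1 & v1 & HG1 & _);
    [split; lra|].
  destruct (Gamma_exists_ge_straight (- b0) b0 (- w) w) as (G2 & v2 & HG2 & Hv2 & Hv2G);
    [split; lra|].
  exists G1, G2. split; [exact HG1|]. split; [exact HG2|].
  pose proof (Gamma_diagonal_le w b0 delta G1 ltac:(lra) HG1) as HG1b.
  assert (HG2b : -1 * smoothed_prim b r delta 0 (- delta) n ((b0 - w) + - b0 - q)
                 - -1 * smoothed_prim b r delta 0 (- delta) n (- b0 - q) <= v2).
  { apply (straight_value_ge delta (-1) (b0 - w) (- b0)
      (fun s => gamma (- w - - b0) (w - b0) / c ((- w - - b0) * s + - b0 - q)) v2); try lra; auto.
    intros s. replace (- w - - b0) with (- (w - b0)) by ring.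
    rewrite gamma_antidiagonal by lra. replace (- (w - b0)) with (b0 - w) by ring.
    unfold Rdiv. lra. }
  replace (b0 - w + - b0 - q) with (- w - q) in HG2b by ring.
  pose proof (smoothed_prim_gap b r delta ltac:(lra) n (- b0 - q) (- w - q)) as Hgap.
  set (e := sqrt delta) in *.
  pose proof (inv_speed_bound_ge0 r n (proj2 Hdat 0%nat ltac:(lia))) as HD. fold D in HD.
  pose proof (smoothing_defect_ge0 r n (proj2 Hdat 0%nat ltac:(lia))) as HK. fold K in HK, Hgap.
  assert (delta * K <= e * K) by (apply Rmult_le_compat_r; lra).
  assert (Hlin : D * (1 + / e) * (b0 - w) + D * (e + (1 + / e)) * (w + delta - b0)
                 = D * (e * (w - b0) + e * delta + delta + / e * delta)) by ring.
  rewrite Hinv in Hlin.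
  assert (D * (e * (w - b0) + e * delta + delta + e) <= D * (e * w + 3 * e))
    by (apply Rmult_le_compat_l; nra).
  nra.
Qed.

End Gamma.

Theorem mainTheorem9 :
  forall (n : nat) (b r : nat -> R) (q z w : R),
    is_step_speed_data n b r -> 0 < z -> 0 < w ->
    let c := step_speed n b r in
    exists C : R,
      (forall delta a : R, 0 < delta <= 1 -> 0 <= a <= z ->
         exists G1 G2 : R,
           is_Gamma c q (a, 0) (z, delta) G1 /\
           is_Gamma c q (a, 0) (z, 0) G2 /\
           G1 - G2 <= C * sqrt delta) /\
      (forall delta b0 : R, 0 < delta <= 1 -> 0 <= b0 <= w ->
         exists G1 G2 : R,
           is_Gamma c q (- b0, b0) (- w, w + delta) G1 /\
           is_Gamma c q (- b0, b0) (- w, w) G2 /\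
           G1 - G2 <= C * sqrt delta).
Proof.
  intros n b r q z w Hdat Hz Hw c.
  set (D := inv_speed_bound r n). set (K := smoothing_defect r n).
  assert (HD : 0 <= D) by (apply inv_speed_bound_ge0, (proj2 Hdat); lia).
  assert (HC : forall x delta, 0 <= x <= z + w -> 0 < delta ->
    (K + D * (x + 3)) * sqrt delta <= (K + D * (z + w + 3)) * sqrt delta).
  { intros x delta Hx Hd. apply Rmult_le_compat_r; [apply sqrt_pos | nra]. }
  exists (K + D * (z + w + 3)). split.
  - intros delta a Hd Ha.
    destruct (Gamma_vertical_increment n b r q Hdat z a delta Hd Ha) as (G1 & G2 & H1 & H2 & H12).
    exists G1, G2. split; [exact H1|]. split; [exact H2|].
    fold D K in H12. pose proof (HC z delta ltac:(lra) ltac:(lra)). lra.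
  - intros delta b0 Hd Hb.
    destruct (Gamma_diagonal_increment n b r q Hdat w b0 delta Hd Hb) as (G1 & G2 & H1 & H2 & H12).
    exists G1, G2. split; [exact H1|]. split; [exact H2|].
    fold D K in H12. pose proof (HC w delta ltac:(lra) ltac:(lra)). lra.
Qed.
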